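(* Let $Y$ be a complete geodesic CAT(0) space. For every finite weighted graph $(C,m)$, $\lambda^{Gro}(C,Y)\le\lambda(C,Y)$, with equality when $Y$ is Euclidean.
   Context: For a finite graph $C$ a weight is a positive function $m$ on edges, vertices and $\emptyset$ with $m(c)=\sum_{e\ni c}m(e)$ and $m(\emptyset)=\sum_c m(c)$. For $g:C^0\to Y$: $E(g)=\sum_{\text{edges }e}m(e)d(g(\mathrm{ori}\,e),g(\mathrm{ext}\,e))^2$; $\mathrm{bar}(g)$ is the unique minimizer of $y\mapsto\sum_c m(c)d(g(c),y)^2$; $RQ(g)=E(g)/\sum_c m(c)d(g(c),\mathrm{bar}(g))^2$ and $\lambda(C,Y)=\inf RQ(g)$ over non-constant $g$. Gromov's version: $F(g)=\frac{1}{2m(\emptyset)}\sum_{c,c'}m(c)m(c')d(g(c),g(c'))^2$ (sum over ordered pairs of vertices), $RQ^{Gro}(g)=E(g)/F(g)$, and $\lambda^{Gro}(C,Y)=\inf RQ^{Gro}(g)$ over non-constant $g$. *)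

From HB Require Import structures.
From mathcomp Require Import all_boot all_order all_algebra.
From mathcomp Require Import all_classical all_reals ereal.
From Stdlib Require Import ClassicalEpsilon.
Set Implicit Arguments. Unset Strict Implicit. Unset Printing Implicit Defensive.
Import Order.TTheory GRing.Theory Num.Theory.
Local Open Scope ring_scope.

Section MetricDefs.
Variables (R : realType) (Y : Type) (d : Y -> Y -> R).

Definition is_metric : Prop :=
  (forall x y, 0 <= d x y) /\ (forall x y, d x y = 0 <-> x = y) /\
  (forall x y, d x y = d y x) /\ (forall x y z, d x z <= d x y + d y z).

Definition is_complete : Prop :=
  forall u : nat -> Y,
    (forall e : R, 0 < e -> exists N, forall m n, (N <= m)%N -> (N <= n)%N -> d (u m) (u n) < e) ->
    exists l, forall e : R, 0 < e -> exists N, forall n, (N <= n)%N -> d (u n) l < e.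

Definition is_geodesic (g : R -> Y) (x y : Y) : Prop :=
  g 0 = x /\ g 1 = y /\
  forall s t, 0 <= s <= 1 -> 0 <= t <= 1 -> d (g s) (g t) = `|s - t| * d x y.

Definition is_geodesic_space : Prop := forall x y, exists g, is_geodesic g x y.

(* CAT(0) comparison inequality: distance from a vertex z of a geodesic
   triangle to the point g t of the opposite side [x,y] is at most the
   distance in the Euclidean comparison triangle (computed by Stewart's formula) *)
Definition CAT0_ineq : Prop :=
  forall (g : R -> Y) x y z t, is_geodesic g x y -> 0 <= t <= 1 ->
    d z (g t) ^+ 2 <= (1 - t) * d z x ^+ 2 + t * d z y ^+ 2 - t * (1 - t) * d x y ^+ 2.

Definition complete_geodesic_CAT0 : Prop :=
  [/\ is_metric, is_complete, is_geodesic_space & CAT0_ineq].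
End MetricDefs.

Section GraphDefs.
Variables (R : realType) (V E : finType) (ori ext : E -> V) (mE : E -> R).

Definition mV (c : V) : R := \sum_(e : E | (ori e == c) || (ext e == c)) mE e.
Definition m0 : R := \sum_(c : V) mV c.

Definition weight_ok : Prop := (forall e, 0 < mE e) /\ (forall c, 0 < mV c).

Variables (Y : Type) (d : Y -> Y -> R).

Definition energy (g : V -> Y) : R :=
  \sum_(e : E) mE e * d (g (ori e)) (g (ext e)) ^+ 2.

Definition bar_fun (g : V -> Y) (y : Y) : R := \sum_(c : V) mV c * d (g c) y ^+ 2.

Definition is_barycenter (g : V -> Y) (y : Y) : Prop :=
  forall z, bar_fun g y <= bar_fun g z.

Definition bar (g : V -> Y) : option Y :=
  match [pick c : V] with
  | Some c => Some (epsilon (inhabits (g c)) (is_barycenter g))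
  | None => None
  end.

Definition RQ (g : V -> Y) : R :=
  energy g / (match bar g with Some b => bar_fun g b | None => 0 end).

Definition Fgro (g : V -> Y) : R :=
  (2 * m0)^-1 * \sum_(c : V) \sum_(c' : V) mV c * mV c' * d (g c) (g c') ^+ 2.

Definition RQgro (g : V -> Y) : R := energy g / Fgro g.

Definition nonconstant (g : V -> Y) : Prop := exists c c', g c <> g c'.

Definition lambda : \bar R := ereal_inf [set (RQ g)%:E | g in nonconstant].
Definition lambda_gro : \bar R := ereal_inf [set (RQgro g)%:E | g in nonconstant].
End GraphDefs.

Definition euclid_dist (R : realType) (n : nat) (x y : 'rV[R]_n) : R :=
  Num.sqrt (\sum_(i < n) (x ord0 i - y ord0 i) ^+ 2).

From HB Require Import structures.
From mathcomp Require Import all_boot all_order all_algebra.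
From mathcomp Require Import all_classical all_reals ereal.
From mathcomp Require Import lra ring.
From Stdlib Require Import ClassicalEpsilon.
Import Order.TTheory GRing.Theory Num.Theory.
Local Open Scope ring_scope.

(* In a CAT(0) space the functional f y = sum_c m(c) d(g c, y)^2 is
   m(emptyset)-uniformly convex along geodesics.  Hence its minimizing
   sequences are Cauchy, f has a minimizer b = bar g, and b satisfies the
   variance inequality f b + m(emptyset) d(y, b)^2 <= f y.  Averaging this
   inequality over y = g c with weights m(c) gives
   2 m(emptyset) f b <= sum_c m(c) f (g c) = 2 m(emptyset) F g,
   so the denominator of RQ is at most that of RQ^Gro.  In Euclidean space
   the variance inequality is an identity (the parallel axis theorem), so the
   two denominators coincide. *)

Lemma ler_of_le_add_small {R : realFieldType} (x y K : R) :
  (forall t, 0 < t <= 1 -> x <= y + t * K) -> x <= y.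
Proof.
move=> le_xy; have [K_le0 | K_gt0] := leP K 0.
  by apply: le_trans (le_xy 1 _) _; rewrite ?ltr01 ?lexx // mul1r gerDl.
apply/ler_addgt0Pr => e e_gt0; pose t := Num.min 1 (e / K).
have t_gt0 : 0 < t by rewrite lt_min ltr01 divr_gt0.
have t_le1 : t <= 1 by rewrite ge_min lexx.
apply: le_trans (le_xy t _) _; first by rewrite t_gt0 t_le1.
by rewrite lerD2l -ler_pdivlMr // ge_min lexx orbT.
Qed.

Lemma ereal_inf_image_le (R : realType) (T : Type) (P : set T) (F G : T -> R) :
  (forall x, P x -> F x <= G x) ->
  (ereal_inf [set (F x)%:E | x in P] <= ereal_inf [set (G x)%:E | x in P])%E.
Proof.
move=> le_FG; apply/ereal_infP => _ [x Px <-].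
apply: (@le_trans _ _ (F x)%:E); first by apply: ereal_inf_lbound; exists x.
by rewrite lee_fin le_FG.
Qed.

Section WeightedSquares.
Variables (R : comPzRingType) (I : finType) (w a : I -> R).

Lemma sum_sqr_sub_expand z : \sum_i w i * (a i - z) ^+ 2 =
  \sum_i w i * a i ^+ 2 - 2 * z * \sum_i w i * a i + z ^+ 2 * \sum_i w i.
Proof.
transitivity (\sum_i (w i * a i ^+ 2 - (2 * z) * (w i * a i) + z ^+ 2 * w i)).
  by apply: eq_bigr => i _; ring.
by rewrite big_split sumrB /= -!mulr_sumr.
Qed.

Lemma sum_sqr_sub_mean mu z :
  \sum_i w i * a i = mu * \sum_i w i ->
  \sum_i w i * (a i - z) ^+ 2 =
    \sum_i w i * (a i - mu) ^+ 2 + (\sum_i w i) * (z - mu) ^+ 2.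
Proof. by move=> mean_mu; rewrite !sum_sqr_sub_expand mean_mu; ring. Qed.

End WeightedSquares.

Lemma euclid_dist_sqr (R : realType) (n : nat) (x y : 'rV[R]_n) :
  euclid_dist x y ^+ 2 = \sum_i (x ord0 i - y ord0 i) ^+ 2.
Proof. by rewrite sqr_sqrtr // sumr_ge0 // => i _; exact: sqr_ge0. Qed.

Section WeightedGraph.
Variables (R : realType) (V E : finType) (ori ext : E -> V) (mE : E -> R).
Hypothesis Hw : weight_ok ori ext mE.

Local Notation mv := (mV ori ext mE).
Local Notation M := (m0 ori ext mE).

Lemma mV_gt0 c : 0 < mv c.
Proof. by case: Hw. Qed.

Lemma m0_ge0 : 0 <= M.
Proof. by apply: sumr_ge0 => c _; exact/ltW/mV_gt0. Qed.

Lemma m0_gt0 (c0 : V) : 0 < M.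
Proof.
rewrite /m0 (bigD1 c0) //= ltr_wpDr ?mV_gt0 //.
by apply: sumr_ge0 => c _; exact/ltW/mV_gt0.
Qed.

Section Functional.
Context {Y : Type} (d : Y -> Y -> R) (g : V -> Y).

Local Notation f := (bar_fun ori ext mE d g).

Lemma bar_fun_ge0 y : 0 <= f y.
Proof. by apply: sumr_ge0 => c _; rewrite mulr_ge0 ?sqr_ge0 ?ltW ?mV_gt0. Qed.

Lemma energy_ge0 : 0 <= energy ori ext mE d g.
Proof. by apply: sumr_ge0 => e _; rewrite mulr_ge0 ?sqr_ge0 // ltW //; case: Hw. Qed.

Lemma Fgro_bar_fun : Fgro ori ext mE d g = (2 * M)^-1 * \sum_c mv c * f (g c).
Proof.
rewrite /Fgro exchange_big; congr (_ * _); apply: eq_bigr => c _.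
by rewrite /bar_fun mulr_sumr; apply: eq_bigr => c' _; rewrite mulrA [mv c * _]mulrC.
Qed.

Lemma sum_bar_fun_variance b :
  \sum_c mv c * (f b + M * d (g c) b ^+ 2) = 2 * M * f b.
Proof.
under eq_bigr do rewrite mulrDr mulrCA.
by rewrite big_split /= -mulr_suml -mulr_sumr /bar_fun /m0; ring.
Qed.

Lemma bar_fun_le_Fgro b : 0 < M ->
  (forall y, f b + M * d y b ^+ 2 <= f y) -> f b <= Fgro ori ext mE d g.
Proof.
move=> M_gt0 variance; rewrite Fgro_bar_fun ler_pdivlMl ?mulr_gt0 //.
rewrite -sum_bar_fun_variance; apply: ler_sum => c _.
by rewrite ler_pM2l ?variance ?mV_gt0.
Qed.

Lemma bar_fun_eq_Fgro b : 0 < M ->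
  (forall y, f b + M * d y b ^+ 2 = f y) -> f b = Fgro ori ext mE d g.
Proof.
move=> M_gt0 variance; rewrite Fgro_bar_fun.
under eq_bigr do rewrite -variance.
by rewrite sum_bar_fun_variance mulKf // mulf_neq0 // gt_eqF.
Qed.

(* [bar g] is an arbitrary minimizer, but all minimizers give the same value. *)
Lemma RQ_barycenter b : is_barycenter ori ext mE d g b ->
  RQ ori ext mE d g = energy ori ext mE d g / f b.
Proof.
move=> b_min; rewrite /RQ /bar; case: pickP => [c _ | V0].
  have := epsilon_spec (inhabits (g c)) (is_barycenter ori ext mE d g) (ex_intro _ b b_min).
  by move=> eps_min; congr (_ / _); apply/le_anti; rewrite eps_min b_min.
by rewrite /bar_fun big_pred0.
Qed.

Section MetricSpace.
Hypothesis Hmet : is_metric d.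

Lemma dist_ge0 x y : 0 <= d x y. Proof. by case: Hmet. Qed.

Lemma dist_eq0 x y : d x y = 0 -> x = y. Proof. by case: Hmet => _ [+ _] => /(_ x y) []. Qed.

Lemma dist_triangle x y z : d x z <= d x y + d y z. Proof. by case: Hmet => _ [_ [_]]. Qed.

Lemma bar_fun_gt0 y : nonconstant g -> 0 < f y.
Proof.
move=> [c [c' gcc']]; rewrite lt_def bar_fun_ge0 // andbT; apply/eqP => f0.
have term_ge0 c1 : true -> 0 <= mv c1 * d (g c1) y ^+ 2.
  by rewrite mulr_ge0 ?sqr_ge0 ?ltW ?mV_gt0.
have g_eq_y c1 : g c1 = y.
  have /eqP := @psumr_eq0P _ _ _ _ term_ge0 f0 c1 isT.
  by rewrite mulf_eq0 gt_eqF ?mV_gt0 //= sqrf_eq0 => /eqP /dist_eq0.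
by apply: gcc'; rewrite !g_eq_y.
Qed.

(* From [d (g c) l <= d (g c) y + d y l] and [2 a <= a ^+ 2 + 1]. *)
Lemma bar_fun_triangle y l :
  f l <= f y + d y l * (f y + M) + d y l ^+ 2 * M.
Proof.
set r := d y l.
have -> : f y + r * (f y + M) + r ^+ 2 * M =
    \sum_c (mv c * d (g c) y ^+ 2 + r * (mv c * d (g c) y ^+ 2 + mv c) + r ^+ 2 * mv c).
  by rewrite !big_split /= -!mulr_sumr big_split.
apply: ler_sum => c _.
have r_ge0 : 0 <= r := dist_ge0 y l.
have a_ge0 := dist_ge0 (g c) y; have b_ge0 := dist_ge0 (g c) l.
have le_ab : d (g c) l <= d (g c) y + r := dist_triangle _ _ _.
have le_sqr : d (g c) l ^+ 2 <= d (g c) y ^+ 2 + r * (d (g c) y ^+ 2 + 1) + r ^+ 2.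
  have : d (g c) l ^+ 2 <= (d (g c) y + r) ^+ 2 by rewrite lerXn2r // nnegrE addr_ge0.
  have : 0 <= r * (d (g c) y - 1) ^+ 2 by rewrite mulr_ge0 // sqr_ge0.
  nra.
rewrite [X in _ <= X](_ : _ = mv c * (d (g c) y ^+ 2 + r * (d (g c) y ^+ 2 + 1) + r ^+ 2)).
  by rewrite ler_pM2l ?mV_gt0.
by ring.
Qed.

Lemma minimizing_limit i (u : nat -> Y) l :
  (forall t, 0 < t -> exists N, forall n, (N <= n)%N -> f (u n) <= i + t) ->
  (forall e, 0 < e -> exists N, forall n, (N <= n)%N -> d (u n) l < e) ->
  f l <= i.
Proof.
move=> u_min u_to_l; apply: (ler_of_le_add_small _ _ (2 + i + 2 * M)).
move=> t /andP[t_gt0 t_le1].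
have [N1 near_l] := u_to_l t t_gt0; have [N2 near_i] := u_min t t_gt0.
pose n := maxn N1 N2.
have := bar_fun_triangle (u n) l.
have := near_l n (leq_maxl _ _); have := near_i n (leq_maxr _ _).
have := bar_fun_ge0 (u n); have := dist_ge0 (u n) l; have := m0_ge0.
move: (d (u n) l) (f (u n)) => r fu M_ge0 r_ge0 fu_ge0 fu_le r_lt.
have r_le1 : r <= 1 by apply: le_trans (ltW r_lt) t_le1.
have r_fu : r * (fu + M) <= t * (fu + M) by apply: ler_wpM2r (ltW r_lt); exact: addr_ge0.
have r2_le : r ^+ 2 <= t by nra.
have r2_M : r ^+ 2 * M <= t * M by exact: ler_wpM2r.
have t_fu : t * fu <= t * (i + t) by rewrite ler_pM2l.
have t2 : t * t <= t by exact: ler_piMr (ltW t_gt0) t_le1.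
lra.
Qed.

Section CAT0Space.
Hypotheses (Hc : is_complete d) (Hgeo : is_geodesic_space d) (Hcat : CAT0_ineq d).

Lemma bar_fun_geodesic {gm : R -> Y} {x y : Y} {t : R} :
  is_geodesic d gm x y -> 0 <= t <= 1 ->
  f (gm t) <= (1 - t) * f x + t * f y - t * (1 - t) * (M * d x y ^+ 2).
Proof.
move=> gm_geo t01; rewrite /bar_fun /m0 mulr_suml !mulr_sumr -big_split -sumrB /=.
apply: ler_sum => c _; rewrite [X in _ <= X](_ : _ = mv c *
    ((1 - t) * d (g c) x ^+ 2 + t * d (g c) y ^+ 2 - t * (1 - t) * d x y ^+ 2)).
  by rewrite ler_pM2l ?mV_gt0 //; exact: Hcat.
by ring.
Qed.

Lemma bar_fun_midpoint i x y : (forall z, i <= f z) ->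
  M * d x y ^+ 2 <= 2 * (f x + f y - 2 * i).
Proof.
move=> f_ge_i; have [gm gm_geo] := Hgeo x y.
have half01 : 0 <= (2^-1 : R) <= 1 by apply/andP; split; lra.
have := bar_fun_geodesic gm_geo half01; have := f_ge_i (gm 2^-1).
move: (M * _) => D; lra.
Qed.

Lemma barycenter_variance b : is_barycenter ori ext mE d g b ->
  forall y, f b + M * d y b ^+ 2 <= f y.
Proof.
move=> b_min y; have [gm gm_geo] := Hgeo y b.
apply: (ler_of_le_add_small _ _ (M * d y b ^+ 2)) => s /andP[s_gt0 s_le1].
have t01 : 0 <= 1 - s <= 1 by apply/andP; split; lra.
have := bar_fun_geodesic gm_geo t01; have := b_min (gm (1 - s)).
move: (M * _) => D; nra.
Qed.

Lemma minimizing_cauchy (c0 : V) i (u : nat -> Y) :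
  (forall z, i <= f z) ->
  (forall t, 0 < t -> exists N, forall n, (N <= n)%N -> f (u n) <= i + t) ->
  forall e, 0 < e -> exists N, forall m n, (N <= m)%N -> (N <= n)%N -> d (u m) (u n) < e.
Proof.
move=> f_ge_i u_min e e_gt0; have M_gt0 := m0_gt0 c0.
have t_gt0 : 0 < M * e ^+ 2 / 8 by rewrite !mulr_gt0 ?exprn_gt0.
have [N near_i] := u_min _ t_gt0.
exists N => m n Nm Nn.
have := bar_fun_midpoint i (u m) (u n) f_ge_i; have := near_i m Nm; have := near_i n Nn.
move=> fn_le fm_le mid.
have sqr_lt : d (u m) (u n) ^+ 2 < e ^+ 2.
  have Me_gt0 : 0 < M * e ^+ 2 by rewrite mulr_gt0 ?exprn_gt0.
  rewrite -(ltr_pM2l M_gt0); move: (M * e ^+ 2) (M * _) Me_gt0 mid fm_le fn_le => Me Md.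
  lra.
by rewrite -(ltr_pXn2r (_ : 0 < 2)%N) ?nnegrE ?dist_ge0 ?ltW.
Qed.

Lemma exists_barycenter (c0 : V) : exists b, is_barycenter ori ext mE d g b.
Proof.
pose i := inf (range f).
have range_inf : has_inf (range f).
  by split; [exists (f (g c0)), (g c0) | exists 0 => _ [y _ <-]; exact: bar_fun_ge0].
have f_ge_i z : i <= f z by apply: ge_inf; [case: range_inf | exists z].
have approx n : exists y, f y < i + n.+1%:R^-1.
  have inv_gt0 : 0 < (n.+1%:R^-1 : R) by rewrite invr_gt0 ltr0Sn.
  have [_ [y _ <-] fy_lt] := inf_adherent inv_gt0 range_inf.
  by exists y.
have [u near_inf] := boolp.choice approx.
have u_min t : 0 < t -> exists N, forall n, (N <= n)%N -> f (u n) <= i + t.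
  move=> t_gt0; have [N N_lt] := ltr_add_invr t_gt0; rewrite add0r in N_lt.
  exists N => n Nn; apply/ltW/(lt_le_trans (near_inf n)).
  rewrite lerD2l (le_trans _ (ltW N_lt)) // lef_pV2 ?posrE ?ltr0Sn //.
  by rewrite ler_nat ltnS.
have [l u_to_l] := Hc u (minimizing_cauchy c0 i u f_ge_i u_min).
by exists l => z; exact: le_trans (minimizing_limit i u l u_min u_to_l) (f_ge_i z).
Qed.

Lemma RQgro_le_RQ : nonconstant g -> RQgro ori ext mE d g <= RQ ori ext mE d g.
Proof.
move=> g_ncst; have [c0 _] := g_ncst; have [b b_min] := exists_barycenter c0.
have fb_gt0 := bar_fun_gt0 b g_ncst.
have fb_le := bar_fun_le_Fgro b (m0_gt0 c0) (barycenter_variance b b_min).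
rewrite (RQ_barycenter b b_min) /RQgro ler_wpM2l ?energy_ge0 //.
by rewrite lef_pV2 ?posrE // (lt_le_trans fb_gt0).
Qed.

End CAT0Space.

End MetricSpace.

End Functional.

Section Euclidean.
Variables (n : nat) (g : V -> 'rV[R]_n).

Local Notation d := (@euclid_dist R n).
Local Notation f := (bar_fun ori ext mE d g).

Definition weighted_mean : 'rV[R]_n := \row_i (M^-1 * \sum_c mv c * g c ord0 i).

Lemma bar_fun_coord z : f z = \sum_i \sum_c mv c * (g c ord0 i - z ord0 i) ^+ 2.
Proof.
rewrite /bar_fun; under eq_bigr do rewrite euclid_dist_sqr mulr_sumr.
by rewrite exchange_big.
Qed.

Lemma euclid_bar_fun_mean (c0 : V) z :
  f z = f weighted_mean + M * d z weighted_mean ^+ 2.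
Proof.
rewrite !bar_fun_coord euclid_dist_sqr mulr_sumr -big_split /=.
apply: eq_bigr => i _; apply: sum_sqr_sub_mean.
by rewrite mxE mulrAC mulVf ?mul1r // gt_eqF // m0_gt0.
Qed.

Lemma RQ_euclid_eq_RQgro : nonconstant g -> RQ ori ext mE d g = RQgro ori ext mE d g.
Proof.
move=> [c0 _]; have parallel_axis := euclid_bar_fun_mean c0.
have mean_min : is_barycenter ori ext mE d g weighted_mean.
  by move=> z; rewrite (parallel_axis z) lerDl mulr_ge0 ?sqr_ge0 ?m0_ge0.
rewrite (RQ_barycenter _ _ _ mean_min) /RQgro.
by rewrite (bar_fun_eq_Fgro _ _ _ (m0_gt0 c0)) // => y; rewrite -parallel_axis.
Qed.

End Euclidean.

End WeightedGraph.

Theorem mainTheorem10 (R : realType) (V E : finType) (ori ext : E -> V) (mE : E -> R) :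
  weight_ok ori ext mE ->
  (forall (Y : Type) (d : Y -> Y -> R), complete_geodesic_CAT0 d ->
     (lambda_gro ori ext mE d <= lambda ori ext mE d)%E) /\
  (forall n : nat,
     lambda_gro ori ext mE (@euclid_dist R n) = lambda ori ext mE (@euclid_dist R n)).
Proof.
move=> Hw; split=> [Y d [Hmet Hc Hgeo Hcat] | n].
  by apply: ereal_inf_image_le => g; exact: RQgro_le_RQ.
rewrite /lambda /lambda_gro; congr ereal_inf; apply: eq_imagel => g g_ncst.
by rewrite RQ_euclid_eq_RQgro.
Qed.
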